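(* Let $G=(V,E)$ be an undirected graph having a strongly connected orientation. A strongly connected orientation of $G$ is decreasingly minimal among the strongly connected orientations of $G$ if and only if it is increasingly maximal among them.
   Context: An orientation's in-degree vector is $(\varrho_D(v))_{v\in V}$, $\varrho_D(v)$ the number of arcs with head $v$. Decreasingly minimal: largest in-degree as small as possible within the class, then second largest, etc. Increasingly maximal: smallest in-degree as large as possible within the class, then second smallest, etc. *)

From mathcomp Require Import all_boot.
Set Implicit Arguments. Unset Strict Implicit. Unset Printing Implicit Defensive.

(* Parallel edges are
   allowed.  An orientation D assigns to each edge a direction: if [D e] is
   true the edge is oriented from (ends e).1 to (ends e).2, otherwise from
   (ends e).2 to (ends e).1. *)

Section Orientations.
Variables (V E : finType) (ends : E -> V * V).

Definition orientation := {ffun E -> bool}.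

Definition otail (D : orientation) (e : E) : V :=
  if D e then (ends e).1 else (ends e).2.
Definition ohead (D : orientation) (e : E) : V :=
  if D e then (ends e).2 else (ends e).1.

Definition arc (D : orientation) : rel V :=
  fun x y => [exists e, (otail D e == x) && (ohead D e == y)].

Definition strongly_connected (D : orientation) : Prop :=
  forall u v : V, connect (arc D) u v.

Definition indeg (D : orientation) (v : V) : nat :=
  #|[set e | ohead D e == v]|.

Definition dec_vec (D : orientation) : seq nat :=
  sort geq [seq indeg D v | v <- enum V].
Definition inc_vec (D : orientation) : seq nat :=
  sort leq [seq indeg D v | v <- enum V].

Fixpoint lexlt (s t : seq nat) : bool :=
  match s, t with
  | x :: s', y :: t' => (x < y) || ((x == y) && lexlt s' t')
  | _, _ => false
  end.

Definition dec_min_sc (D : orientation) : Prop :=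
  strongly_connected D /\
  forall D' : orientation, strongly_connected D' -> ~~ lexlt (dec_vec D') (dec_vec D).

Definition inc_max_sc (D : orientation) : Prop :=
  strongly_connected D /\
  forall D' : orientation, strongly_connected D' -> ~~ lexlt (inc_vec D) (inc_vec D').

End Orientations.

From Pilot Require Import Defs.
From mathcomp Require Import all_boot.
From mathcomp Require Import fingroup perm zify.
Set Implicit Arguments. Unset Strict Implicit. Unset Printing Implicit Defensive.

(* The in-degree vectors of strongly connected orientations behave like the
   integer points of a base polyhedron.  A strongly connected orientation has
   an arc leaving every proper nonempty vertex set, and the number of arcs
   leaving a set is submodular; from this, whenever rho_D'(a) < rho_D(a) for
   strongly connected D and D', reversing a suitable path of D moves one unit
   of in-degree from a to some b with rho_D(b) < rho_D'(b) and keeps it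
   strongly connected.
   Decreasing minimality and increasing maximality both forbid such a move
   from a to b when rho(a) >= rho(b) + 2.  Conversely, let D admit no such
   move and let D' be optimal in either sense.  Exchanging twice, starting
   from a vertex a of largest rho_D(a) among those with rho_D'(a) < rho_D(a),
   turns D' into an optimal orientation with the same multiset of in-degrees
   that is closer to D.  Hence D and D' have the same sorted in-degree
   vector, so D is optimal in both senses. *)

Lemma ltn_sum (I : finType) (P : pred I) (F G : I -> nat) i :
  P i -> (forall j, P j -> F j <= G j) -> F i < G i ->
  \sum_(j | P j) F j < \sum_(j | P j) G j.
Proof.
move=> Pi leFG ltFGi; rewrite (bigD1 i) // [in X in _ < X](bigD1 i) //= -addSn leq_add //.
by apply: leq_sum => j /andP [Pj _]; apply: leFG.
Qed.

Lemma sum_eq_mem (T : finType) (x : T) (A : {pred T}) :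
  \sum_(y in A) (x == y) = (x \in A).
Proof.
case xA: (x \in A); last by rewrite big1 // => y; case: eqP => // <-; rewrite xA.
by rewrite (bigD1 x) //= eqxx big1 // => y /andP [_ yx]; rewrite eq_sym (negbTE yx).
Qed.

Lemma geq_total : total geq.
Proof. by move=> m n; apply: leq_total. Qed.

Lemma geq_trans : transitive geq.
Proof. by move=> n m p le_nm le_pn; apply: leq_trans le_pn le_nm. Qed.

Lemma geq_anti : antisymmetric geq.
Proof. by move=> m n; rewrite andbC; apply: anti_leq. Qed.

Lemma perm_map_enum (T : finType) (s : {perm T}) : perm_eq (map s (enum T)) (enum T).
Proof.
apply: uniq_perm; rewrite ?(map_inj_uniq (@perm_inj _ s)) ?enum_uniq // => x.
by rewrite mem_enum; apply/mapP; exists (s^-1 x)%g; rewrite ?mem_enum ?permKV.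
Qed.

Lemma exists_maximal (T : finType) (r : rel T) (P : pred T) x :
  irreflexive r -> transitive r -> P x ->
  exists2 y, P y & forall z, P z -> ~~ r y z.
Proof.
move=> r_irr r_trans; have [n] := ubnP #|[set z | P z & r x z]|.
elim: n x => // n IH x lt_n Px.
case: (pickP [pred z | P z & r x z]) => [y /andP [Py rxy] | none]; last first.
  by exists x => // z Pz; apply/negP => rxz; have := none z; rewrite /= Pz rxz.
apply: (IH y _ Py); rewrite -ltnS (leq_trans _ lt_n) // ltnS proper_card //.
apply/properP; split; last by exists y; rewrite inE ?Py ?rxy // r_irr andbF.
by apply/subsetP => z; rewrite !inE => /andP [-> /(r_trans _ _ _ rxy)].
Qed.

Lemma lexlt_irr : irreflexive lexlt.
Proof. by elim=> //= x s IH; rewrite ltnn eqxx IH. Qed.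

Lemma lexlt_trans : transitive lexlt.
Proof.
move=> t s u; elim: s t u => [|x s IH] [|y t] [|z u] //=.
case/orP => [xy|/andP [/eqP <- st]]; case/orP => [yz|/andP [/eqP <- tu]].
- by rewrite (ltn_trans xy yz).
- by rewrite xy.
- by rewrite yz.
- by rewrite eqxx (IH _ _ st tu) orbT.
Qed.

Lemma sorted_geq_lexlt s t j : sorted geq s -> sorted geq t -> size s = size t ->
  (forall j', j < j' -> count (leq j') s = count (leq j') t) ->
  count (leq j) s < count (leq j) t -> lexlt s t.
Proof.
elim: s t => [|x s IH] [|y t] //= ss st [sz] eq_count lt_count.
have t_lt k : y < k -> count (leq k) t = 0.
  move=> yk; apply/eqP; rewrite -leqn0 leqNgt -has_count; apply/hasPn => n nt.
  have /allP/(_ n nt) := order_path_min geq_trans st.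
  by rewrite /= -ltnNge => ny; apply: leq_ltn_trans yk.
case: (ltngtP x y) => [xy|xy|exy] //.
- exfalso; case: (ltnP j x) => jx.
    by have := eq_count x jx; rewrite /= leqnn (t_lt x xy) leqNgt xy; lia.
  have yj := leq_trans xy jx.
  by move: lt_count; rewrite /= (t_lt j yj) [j <= y]leqNgt yj; lia.
- apply: IH (path_sorted ss) (path_sorted st) sz _ _.
    by move=> j' jj'; have := eq_count j' jj'; rewrite exy; lia.
  by move: lt_count; rewrite exy; lia.
Qed.

Lemma sorted_leq_lexlt s t j : sorted leq s -> sorted leq t -> size s = size t ->
  (forall j', j' < j -> count (geq j') s = count (geq j') t) ->
  count (geq j) t < count (geq j) s -> lexlt s t.
Proof.
elim: s t => [|x s IH] [|y t] //= ss st [sz] eq_count lt_count.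
have s_gt k : k < x -> count (geq k) s = 0.
  move=> kx; apply/eqP; rewrite -leqn0 leqNgt -has_count; apply/hasPn => n ns.
  have /allP/(_ n ns) := order_path_min leq_trans ss.
  by rewrite /= -ltnNge => xn; apply: leq_trans kx xn.
case: (ltngtP x y) => [xy|xy|exy] //.
- exfalso; case: (ltnP y j) => yj.
    by have := eq_count y yj; rewrite /= leqnn (s_gt y xy) [x <= y]leqNgt xy; lia.
  have jx := leq_ltn_trans yj xy.
  by move: lt_count; rewrite /= (s_gt j jx) [x <= j]leqNgt jx; lia.
- apply: IH (path_sorted ss) (path_sorted st) sz _ _.
    by move=> j' jj'; have := eq_count j' jj'; rewrite exy; lia.
  by move: lt_count; rewrite exy; lia.
Qed.

Section Orientations.
Variables (V E : finType) (ends : E -> V * V).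
Implicit Types (D : orientation E) (A B : {set V}).

Local Notation rho := (indeg ends).
Local Notation tail := (otail ends).
Local Notation head := (Defs.ohead ends).
Local Notation arc := (Defs.arc ends).
Local Notation strongly_connected := (strongly_connected ends).

Definition indeg_set D A := \sum_(v in A) rho D v.
Definition outdeg_set D A := \sum_e ((tail D e \in A) && (head D e \notin A)).
Definition edges_meeting A := \sum_e (((ends e).1 \in A) || ((ends e).2 \in A)).

Lemma indegE D v : rho D v = \sum_e (head D e == v).
Proof.
rewrite /indeg -sum1_card big_mkcond /=; apply: eq_bigr => e _.
by rewrite inE; case: (_ == _).
Qed.

Lemma indeg_set_outdeg_set D A : indeg_set D A + outdeg_set D A = edges_meeting A.
Proof.
rewrite /indeg_set (eq_bigr _ (fun v _ => indegE D v)) exchange_big -big_split /=.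
apply: eq_bigr => e _; rewrite sum_eq_mem /otail /Defs.ohead.
by case: (D e); case: ((ends e).1 \in A); case: ((ends e).2 \in A).
Qed.

Lemma indeg_setT D D' : indeg_set D setT = indeg_set D' setT.
Proof.
have outT D0 : outdeg_set D0 setT = 0.
  by rewrite /outdeg_set big1 // => e _; rewrite !inE andbF.
move: (indeg_set_outdeg_set D setT) (indeg_set_outdeg_set D' setT).
by rewrite !outT !addn0 => -> ->.
Qed.

Lemma indeg_set_split D A : indeg_set D setT = indeg_set D A + indeg_set D (~: A).
Proof. by rewrite /indeg_set (big_setID A) setTI setTD. Qed.

Lemma outdeg_set_submod D A B :
  outdeg_set D (A :|: B) + outdeg_set D (A :&: B) <= outdeg_set D A + outdeg_set D B.
Proof.
rewrite /outdeg_set -!big_split /=; apply: leq_sum => e _; rewrite !inE.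
by case: (tail D e \in A); case: (tail D e \in B); case: (head D e \in A); case: (head D e \in B).
Qed.

Lemma strongly_connected_cut D :
  strongly_connected D <-> forall A, A != set0 -> A != setT -> 0 < outdeg_set D A.
Proof.
split=> [scD A /set0Pn [u uA] | cut u v].
  rewrite -subTset => /subsetPn [w _ wA]; rewrite lt0n; apply: contraNN wA => /eqP out0.
  have closed (x y : V) : arc D x y -> x \in A -> y \in A.
    move=> /existsP [e /andP [/eqP <- /eqP <-]] xA; apply: contraT => yA.
    by move: out0; rewrite /outdeg_set (bigD1 e) //= xA yA.
  case/connectP: (scD u w) => p + ->.
  by elim: p u uA => //= x p IH u uA /andP [/closed/(_ uA)/IH].
apply: contraT => nuv; pose A := [set w | connect (arc D) u w].
have uA : u \in A by rewrite inE connect0.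
have AT : A != setT by rewrite -subTset; apply/subsetPn; exists v; rewrite ?inE.
have A0 : A != set0 by apply/set0Pn; exists u.
suff out0 : outdeg_set D A = 0 by have := cut A A0 AT; rewrite out0.
apply: big1 => e _; apply/eqP; rewrite eqb0 !inE; apply/negP => /andP [ue].
rewrite (connect_trans ue) // connect1 //.
by apply/existsP; exists e; rewrite !eqxx.
Qed.

Definition reverse_arc D e0 : orientation E :=
  [ffun e => if e == e0 then ~~ D e else D e].

Definition indeg_transfer D a b D' := forall v, rho D' v + (v == a) = rho D v + (v == b).

Lemma indeg_reverse_arc D e0 : indeg_transfer D (head D e0) (tail D e0) (reverse_arc D e0).
Proof.
move=> v; rewrite !indegE (bigD1 e0) //= [in RHS](bigD1 e0) //=.
have -> : \sum_(e | e != e0) (head (reverse_arc D e0) e == v) =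
          \sum_(e | e != e0) (head D e == v).
  by apply: eq_bigr => e ne; rewrite /Defs.ohead ffunE (negbTE ne).
rewrite /otail /Defs.ohead ffunE eqxx; case: (D e0) => /=; rewrite ![v == _]eq_sym; lia.
Qed.

Lemma transfer_values D a b D' : a != b -> indeg_transfer D a b D' ->
  [/\ (rho D' a).+1 = rho D a, rho D' b = (rho D b).+1 &
      forall v, v != a -> v != b -> rho D' v = rho D v].
Proof.
move=> ab tr; split.
- by have := tr a; rewrite eqxx (negbTE ab) addn1 addn0.
- by have := tr b; rewrite eqxx eq_sym (negbTE ab) addn1 addn0.
- by move=> v va vb; have := tr v; rewrite (negbTE va) (negbTE vb) !addn0.
Qed.

Lemma reverse_path_transfer D b p : path (arc D) b p -> uniq (b :: p) ->
  exists D', indeg_transfer D (last b p) b D'.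
Proof.
elim: p b D => [|c p IH] b D /=; first by exists D.
case/andP => /existsP [e /andP [/eqP te /eqP he]] pth /andP [bp up].
have pth' : path (arc (reverse_arc D e)) c p.
  apply: (@sub_in_path _ (predC1 b)) pth; last first.
    rewrite /= (memPn bp c) ?mem_head //=; apply/allP => w wp /=.
    by apply: contraNneq bp => <-; rewrite inE wp orbT.
  move=> x y /= xb _ /existsP [e' /andP [tx hy]]; apply/existsP; exists e'.
  have e'e : e' != e by apply: contraNneq xb => e'e; rewrite -(eqP tx) e'e te.
  have De' : reverse_arc D e e' = D e' by rewrite ffunE (negbTE e'e).
  by rewrite /otail /Defs.ohead De'; apply/andP.
have [D' tr] := IH c _ pth' up; exists D' => v.
by have := tr v; have := indeg_reverse_arc D e v; rewrite te he; lia.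
Qed.

Lemma outdeg_set_transfer D a b D' A : indeg_transfer D a b D' ->
  outdeg_set D' A + (b \in A) = outdeg_set D A + (a \in A).
Proof.
move=> tr; have in_tr : indeg_set D' A + (a \in A) = indeg_set D A + (b \in A).
  rewrite -!sum_eq_mem /indeg_set -!big_split /=; apply: eq_bigr => v _.
  by rewrite eq_sym [b == v]eq_sym tr.
have := indeg_set_outdeg_set D A; have := indeg_set_outdeg_set D' A; lia.
Qed.

Lemma transfer_strongly_connected D a b : strongly_connected D ->
  (forall A, b \in A -> a \notin A -> 1 < outdeg_set D A) ->
  exists2 D', strongly_connected D' & indeg_transfer D a b D'.
Proof.
move=> scD cut2; case/connectP: (scD b a) => p pth0 a_last.
case: (shortenP pth0) a_last => p' pth up' _ a_last.
have [D' tr] := reverse_path_transfer pth up'; rewrite -a_last in tr.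
exists D' => //; apply/strongly_connected_cut => A A0 AT.
have := outdeg_set_transfer A tr; have := (strongly_connected_cut D).1 scD A A0 AT.
case bA: (b \in A); case aA: (a \in A) => /=; try lia.
by have := cut2 A bA (negbT aA); lia.
Qed.

(* The sets that prevent [transfer_strongly_connected] from moving in-degree
   from one of their vertices to [a]. *)
Definition tight D a A := [&& a \notin A, A != set0 & outdeg_set D A <= 1].

Lemma tightU D a A B : strongly_connected D ->
  tight D a A -> tight D a B -> A :&: B != set0 -> tight D a (A :|: B).
Proof.
move=> scD /and3P [aA A0 outA] /and3P [aB _ outB] AB0.
have ABT : A :&: B != setT.
  by rewrite -subTset; apply/subsetPn; exists a; rewrite ?inE ?(negbTE aA).
have := outdeg_set_submod D A B; have := (strongly_connected_cut D).1 scD _ AB0 ABT.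
rewrite /tight inE negb_or aA aB setU_eq0 negb_and A0 /=; lia.
Qed.

Lemma maximal_tight_trivIset D a : strongly_connected D ->
  trivIset [set A | maxset (tight D a) A].
Proof.
move=> scD; apply/trivIsetP => A B; rewrite !inE => mA mB; apply: contraR.
rewrite -setI_eq0 => AB0; have tU := tightU scD (maxsetp mA) (maxsetp mB) AB0.
by rewrite -[A](maxsetsup mA tU (subsetUl A B)) (maxsetsup mB tU (subsetUr A B)).
Qed.

Lemma indeg_set_tight D D' a A : strongly_connected D' -> tight D a A ->
  indeg_set D' A <= indeg_set D A.
Proof.
move=> scD' /and3P [aA A0 outA].
have AT : A != setT by apply: contraNneq aA => ->; rewrite inE.
have := (strongly_connected_cut D').1 scD' A A0 AT.
have := indeg_set_outdeg_set D A; have := indeg_set_outdeg_set D' A; lia.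
Qed.

Lemma exists_untight_deficit D D' a :
  strongly_connected D -> strongly_connected D' -> rho D' a < rho D a ->
  exists2 b, rho D b < rho D' b & forall A, b \in A -> ~~ tight D a A.
Proof.
move=> scD scD' lt_a.
case: (boolP [exists b, (rho D b < rho D' b) &&
                         [forall A : {set V}, (b \in A) ==> ~~ tight D a A]]).
  by case/existsP => b /andP [lt_b /forallP untight]; exists b => // A; apply/implyP.
rewrite negb_exists => /forallP all_tight; exfalso.
(* Otherwise all vertices where D' exceeds D lie in the union C of the (disjoint)
   maximal tight sets: D' then has at most the in-degree of D on C and strictly
   less off C, although both have total in-degree |E|. *)
pose C := cover [set A | maxset (tight D a) A].
have deficit_in_C b : rho D b < rho D' b -> b \in C.
  move=> lt_b; move: (all_tight b); rewrite lt_b negb_forall => /existsP [A].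
  rewrite negb_imply negbK => /andP [bA tA]; have [M maxM AM] := maxset_exists tA.
  by apply/bigcupP; exists M; rewrite ?inE // (subsetP AM).
have aC : a \notin C.
  by apply/bigcupP => -[A]; rewrite inE => /maxsetp /and3P [/negbTE-> _ _].
have le_C : indeg_set D' C <= indeg_set D C.
  rewrite /indeg_set !big_trivIset ?maximal_tight_trivIset //; apply: leq_sum => A.
  by rewrite inE => /maxsetp; apply: indeg_set_tight.
have lt_notC : indeg_set D' (~: C) < indeg_set D (~: C).
  apply: (ltn_sum (i := a)); rewrite ?inE // => v; rewrite inE => vC.
  by rewrite leqNgt; apply: contra vC; apply: deficit_in_C.
by have := indeg_setT D D'; rewrite !(indeg_set_split _ C); lia.
Qed.

Lemma exchange D D' a :
  strongly_connected D -> strongly_connected D' -> rho D' a < rho D a ->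
  exists2 b, rho D b < rho D' b &
    exists2 D'', strongly_connected D'' & indeg_transfer D a b D''.
Proof.
move=> scD scD' lt_a; have [b lt_b untight] := exists_untight_deficit scD scD' lt_a.
exists b => //; apply: transfer_strongly_connected => // A bA aA.
rewrite ltnNge; apply: contra (untight A bA) => out1.
by rewrite /tight aA out1 andbT; apply/set0Pn; exists b.
Qed.

Definition indeg_seq D := [seq rho D v | v <- enum V].

Lemma count_indeg_seq D (p : pred nat) : count p (indeg_seq D) = #|[set v | p (rho D v)]|.
Proof.
rewrite count_map -sum1_count big_enum_cond -sum1_card.
by apply: eq_bigl => v; rewrite !inE.
Qed.

Lemma superlevel_transfer D a b D' j : indeg_transfer D a b D' ->
  (rho D b).+1 < rho D a -> rho D a <= j ->
  [set v | j <= rho D' v] = [set v | j <= rho D v] :\ a.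
Proof.
move=> tr lt_ba le_aj; have ab : a != b by apply: contraTneq lt_ba => ->; lia.
have [Da Db Dv] := transfer_values ab tr; apply/setP => v; rewrite !inE.
case: (eqVneq v a) => [->|va] /=; first by lia.
case: (eqVneq v b) => [->|vb]; first by lia.
by rewrite Dv.
Qed.

Lemma sublevel_transfer D a b D' j : indeg_transfer D a b D' ->
  (rho D b).+1 < rho D a -> j <= rho D b ->
  [set v | rho D' v <= j] = [set v | rho D v <= j] :\ b.
Proof.
move=> tr lt_ba le_jb; have ab : a != b by apply: contraTneq lt_ba => ->; lia.
have [Da Db Dv] := transfer_values ab tr; apply/setP => v; rewrite !inE.
case: (eqVneq v b) => [->|vb] /=; first by lia.
case: (eqVneq v a) => [->|va]; first by lia.
by rewrite Dv.
Qed.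

Definition no_improving_transfer D := forall a b D', strongly_connected D' ->
  indeg_transfer D a b D' -> rho D a <= (rho D b).+1.

Lemma dec_min_no_improving D : dec_min_sc ends D -> no_improving_transfer D.
Proof.
move=> [_ opt] a b D' scD' tr; rewrite leqNgt; apply/negP => lt_ba.
have /negP := opt D' scD'; apply.
have sorted_dec D0 : sorted geq (dec_vec ends D0) := sort_sorted geq_total _.
apply: (sorted_geq_lexlt (j := rho D a)) => //.
- by rewrite !size_sort !size_map.
- move=> j lt_aj; rewrite !count_sort !count_indeg_seq.
  rewrite (superlevel_transfer tr lt_ba (ltnW lt_aj)) [in RHS](cardsD1 a).
  by rewrite inE leqNgt lt_aj.
- rewrite !count_sort !count_indeg_seq (superlevel_transfer tr lt_ba (leqnn _)).
  by rewrite [in X in _ < X](cardsD1 a) inE leqnn.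
Qed.

Lemma inc_max_no_improving D : inc_max_sc ends D -> no_improving_transfer D.
Proof.
move=> [_ opt] a b D' scD' tr; rewrite leqNgt; apply/negP => lt_ba.
have /negP := opt D' scD'; apply.
have sorted_inc D0 : sorted leq (inc_vec ends D0) := sort_sorted leq_total _.
apply: (sorted_leq_lexlt (j := rho D b)) => //.
- by rewrite !size_sort !size_map.
- move=> j lt_jb; rewrite !count_sort !count_indeg_seq.
  rewrite (sublevel_transfer tr lt_ba (ltnW lt_jb)) [in LHS](cardsD1 b).
  by rewrite inE /= leqNgt lt_jb.
- rewrite !count_sort !count_indeg_seq (sublevel_transfer tr lt_ba (leqnn _)).
  by rewrite [in X in _ < X](cardsD1 b) inE /= leqnn.
Qed.

Definition excess D D' := \sum_v (rho D v - rho D' v).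

Lemma excess_transfer D D' D'' b a : indeg_transfer D' b a D'' ->
  rho D' a < rho D a -> rho D b < rho D' b -> excess D D'' < excess D D'.
Proof.
move=> tr lt_a lt_b; have ba : b != a by apply/eqP => eba; rewrite eba in lt_b; lia.
have [Db Da Dv] := transfer_values ba tr.
apply: (ltn_sum (i := a)) => // [v _|]; last by lia.
case: (eqVneq v a) => [->|va]; first by lia.
case: (eqVneq v b) => [->|vb]; first by lia.
by rewrite Dv.
Qed.

Lemma indeg_eq_of_le D D' : (forall v, rho D v <= rho D' v) -> rho D =1 rho D'.
Proof.
move=> le_DD' v; apply/eqP; rewrite eqn_leq le_DD' leqNgt; apply/negP => lt_v.
suff : indeg_set D setT < indeg_set D' setT by rewrite (indeg_setT D D') ltnn.
by apply: (ltn_sum (i := v)); rewrite ?inE // => u _; apply: le_DD'.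
Qed.

Lemma transfer_perm_eq D a b D' : indeg_transfer D a b D' ->
  rho D a = (rho D b).+1 -> perm_eq (indeg_seq D') (indeg_seq D).
Proof.
move=> tr Dab; have ab : a != b by apply/eqP => eab; rewrite eab in Dab; lia.
have [Da Db Dv] := transfer_values ab tr.
have swap : rho D' =1 rho D \o tperm a b.
  move=> v /=; case: tpermP => [->|->|/eqP va /eqP vb]; [lia | lia | exact: Dv].
by rewrite /indeg_seq (eq_map swap) map_comp; apply/perm_map/perm_map_enum.
Qed.

Definition strongly_connectedb D := [forall u, forall v, connect (arc D) u v].

Lemma strongly_connectedP D : reflect (strongly_connected D) (strongly_connectedb D).
Proof.
apply: (iffP forallP) => [scD u v | scD u]; first exact: (forallP (scD u)).
exact/forallP.
Qed.

Section Optimality.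
Variables (r : rel (seq nat)) (key : orientation E -> seq nat).
Hypotheses (r_irr : irreflexive r) (r_trans : transitive r).
Hypothesis key_perm :
  forall D D', perm_eq (indeg_seq D) (indeg_seq D') -> key D = key D'.

Definition optimal D :=
  strongly_connected D /\ forall D', strongly_connected D' -> ~~ r (key D) (key D').

Hypothesis optimal_no_improving : forall D, optimal D -> no_improving_transfer D.

Lemma perm_eq_optimal D D' : strongly_connected D -> no_improving_transfer D ->
  optimal D' -> perm_eq (indeg_seq D) (indeg_seq D').
Proof.
move=> scD noD; have [n] := ubnP (excess D D'); elim: n D' => // n IH D' lt_n optD'.
have [/forallP le_DD'|] := boolP [forall v, rho D v <= rho D' v].
  by rewrite /indeg_seq (eq_map (indeg_eq_of_le le_DD')).
rewrite negb_forall => /existsP [a0]; rewrite -ltnNge => lt_a0.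
case: (@arg_maxnP _ a0 (fun v => rho D' v < rho D v) (rho D) lt_a0) => a lt_a max_a.
have [b lt_b [D2 scD2 tr2]] := exchange scD optD'.1 lt_a.
have [a' lt_a' [D3 scD3 tr3]] := exchange optD'.1 scD lt_b.
have le_ab := noD _ _ _ scD2 tr2.
have le_ba' := optimal_no_improving optD' scD3 tr3.
have le_a'a := max_a a' lt_a'.
(* rho_D'(a') < rho_D(a') <= rho_D(a) <= rho_D(b) + 1 <= rho_D'(b) <= rho_D'(a') + 1,
   so D3 merely swaps the in-degrees of a' and b in D' *)
have perm3 : perm_eq (indeg_seq D3) (indeg_seq D') by apply: transfer_perm_eq tr3 _; lia.
have optD3 : optimal D3 by split=> // D0; rewrite (key_perm perm3); apply: optD'.2.
apply: perm_trans (IH D3 _ optD3) perm3.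
by rewrite -ltnS (leq_trans _ lt_n) // ltnS (excess_transfer tr3 lt_a' lt_b).
Qed.

Lemma no_improving_optimal D : strongly_connected D -> no_improving_transfer D -> optimal D.
Proof.
move=> scD noD; pose rkey D1 D2 := r (key D1) (key D2).
have [|||W /strongly_connectedP scW maxW] := @exists_maximal _ rkey strongly_connectedb D.
- by move=> D1; apply: r_irr.
- by move=> D2 D1 D3; apply: r_trans.
- exact/strongly_connectedP.
have optW : optimal W by split=> // D' /strongly_connectedP; apply: maxW.
split=> // D' scD'; rewrite (key_perm (perm_eq_optimal scD noD optW)).
exact: optW.2.
Qed.

End Optimality.

Lemma dec_min_scP D : strongly_connected D ->
  dec_min_sc ends D <-> no_improving_transfer D.
Proof.
move=> scD; split; first exact: dec_min_no_improving.
apply: (no_improving_optimal (r := fun s t => lexlt t s)) => //.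
- by move=> s; apply: lexlt_irr.
- by move=> t s u st tu; apply: lexlt_trans tu st.
- by move=> D1 D2 /(perm_sortP geq_total geq_trans geq_anti).
- exact: dec_min_no_improving.
Qed.

Lemma inc_max_scP D : strongly_connected D ->
  inc_max_sc ends D <-> no_improving_transfer D.
Proof.
move=> scD; split; first exact: inc_max_no_improving.
apply: (no_improving_optimal (r := lexlt)) => //.
- exact: lexlt_irr.
- exact: lexlt_trans.
- by move=> D1 D2 /(perm_sortP leq_total leq_trans anti_leq).
- exact: inc_max_no_improving.
Qed.

End Orientations.

Theorem corollary6p4 (V E : finType) (ends : E -> V * V) :
  (exists D : orientation E, strongly_connected ends D) ->
  forall D : orientation E, strongly_connected ends D ->
    (dec_min_sc ends D <-> inc_max_sc ends D).
Proof.
move=> _ D scD; apply: iff_trans (dec_min_scP scD) _.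
exact: iff_sym (inc_max_scP scD).
Qed.
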